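(* For every planar graph $H$ there is a constant $c(H)$ such that every graph $G$ with $\operatorname{box}(G)\ge c(H)$ has a minor isomorphic to $H$.
   Context: The boxicity $\operatorname{box}(G)$ is the minimum $b$ such that $G$ is the intersection graph of axis-parallel boxes in $\mathbb{R}^b$ (products of $b$ closed intervals), one box per vertex. A minor of $G$ is a graph obtained from a subgraph of $G$ by contracting edges. *)

From HB Require Import structures.
From mathcomp Require Import all_boot all_order all_algebra.
From mathcomp Require Import all_classical all_reals all_analysis.
From mathcomp Require Import Rstruct Rstruct_topology.
Set Implicit Arguments. Unset Strict Implicit. Unset Printing Implicit Defensive.
Import Order.TTheory GRing.Theory Num.Theory.
Local Open Scope ring_scope.


Notation RR := Rdefinitions.R.

Definition simple_graph (V : finType) (E : rel V) : Prop :=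
  symmetric E /\ irreflexive E.

(* G is the intersection graph of axis-parallel boxes in R^b: vertex v gets the
   box prod_i [l v i, r v i]; distinct u, v are adjacent iff their boxes meet. *)
Definition box_rep (V : finType) (E : rel V) (b : nat) : Prop :=
  exists l r : V -> 'I_b -> RR,
    (forall v i, l v i <= r v i) /\
    (forall u v, u != v ->
       (E u v <-> exists x : 'I_b -> RR,
          forall i, (l u i <= x i <= r u i) /\ (l v i <= x i <= r v i))).

Definition boxicity_ge (V : finType) (E : rel V) (c : nat) : Prop :=
  forall b, box_rep E b -> (c <= b)%N.

(* H is (isomorphic to) a minor of G: a minor model by branch sets, i.e.
   pairwise disjoint nonempty vertex sets inducing connected subgraphs of G,
   with an edge of G between the branch sets of every edge of H. *)
Definition induced_conn (V : finType) (E : rel V) (S : {set V}) : Prop :=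
  forall u v, u \in S -> v \in S ->
    connect [rel a b | [&& E a b, a \in S & b \in S]] u v.

Definition is_minor (VH : finType) (EH : rel VH) (VG : finType) (EG : rel VG)
  : Prop :=
  exists phi : VH -> {set VG},
    [/\ forall x, phi x != finset.set0,
        forall x, induced_conn EG (phi x),
        forall x y, x != y -> [disjoint phi x & phi y]
      & forall x y, EH x y ->
          exists u v, [/\ u \in phi x, v \in phi y & EG u v]].

(* Planarity: a drawing in the plane R x R with distinct points for vertices and,
   for each edge, a simple arc (continuous injective map on [0,1]) joining its
   endpoints, whose interior avoids all vertex points and interiors of other
   edges' arcs. The arc for {u,v} is arc u v (arc v u is ignored as a separate
   edge: disjointness is only required between different unordered pairs). *)
Definition unit_interval : set RR := [set t | 0 <= t <= 1]%classic.

Definition planar (V : finType) (E : rel V) : Prop :=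
  exists (p : V -> RR * RR) (arc : V -> V -> RR -> RR * RR),
    [/\ injective p,
        (forall u v, E u v ->
           [/\ {within unit_interval, continuous (arc u v)}%classic,
               {in unit_interval &, injective (arc u v)},
               arc u v 0 = p u & arc u v 1 = p v]),
        (forall u v w t, E u v -> 0 < t < 1 -> arc u v t <> p w)
      & (forall u v u' v' s t, E u v -> E u' v' ->
           ~~ ((u == u') && (v == v') || (u == v') && (v == u')) ->
           0 < s < 1 -> 0 < t < 1 -> arc u v s <> arc u' v' t)].

From mathcomp Require Import all_boot all_order all_algebra zify Rstruct.
From Stdlib Require Import Classical.

(* If G has no K_(t+1) minor, then by Mader's theorem every subgraph of G has a vertex
   of degree at most 2^t, so G has an orientation with in-degrees at most d = 2^t.
   Adding the pairs joined by a directed 2-path or sharing an out-neighbour keeps the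
   graph degenerate: there are at most d^2 such pairs per vertex, except those sharing
   an out-neighbour outside the current vertex set, which are edges of d minors of G.
   So the augmented graph has a proper colouring with k colours.  Any two colour
   classes then induce in G a star forest, an interval graph; one interval dimension
   per ordered pair of colours represents G by boxes in dimension k^2.  Hence
   box(G) > k^2 forces a K_(t+1) minor, which contains every graph on t vertices. *)

Set Implicit Arguments. Unset Strict Implicit. Unset Printing Implicit Defensive.
Import Order.TTheory GRing.Theory Num.Theory.

Lemma connect_invariant (T : finType) (e : rel T) (P : T -> Prop) x y :
  (forall a b, P a -> e a b -> P b) -> connect e x y -> P x -> P y.
Proof.
move=> eP /connectP [p pth ->]; elim: p x pth => //= z p IHp x /andP [exz pth] Px.
exact: IHp pth (eP _ _ Px exz).
Qed.

Section CliqueMinors.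
Variable V : finType.
Implicit Types (E : rel V) (A N R S : {set V}).

Definition nbhd E R u := [set w in R | E u w].
Definition deg E R u := #|nbhd E R u|.
Definition degsum E R := \sum_(u in R) deg E R u.

Definition clique_minor E R m := exists phi : 'I_m -> {set V},
  [/\ forall i, phi i != set0, forall i, phi i \subset R,
      forall i, induced_conn E (phi i),
      forall i j, i != j -> [disjoint phi i & phi j]
    & forall i j, i != j -> exists u v, [/\ u \in phi i, v \in phi j & E u v]].

Lemma card_sep_sum S (P : pred V) : #|[set w in S | P w]| = \sum_(w in S) P w.
Proof.
rewrite -sum1_card big_mkcond [RHS]big_mkcond; apply: eq_bigr => w _.
by rewrite inE; case: (w \in S); case: (P w).
Qed.

Lemma double_count S (P : V -> V -> bool) :
  \sum_(u in S) #|[set w in S | P u w]| = \sum_(w in S) #|[set u in S | P u w]|.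
Proof.
under eq_bigr do rewrite card_sep_sum.
by rewrite exchange_big /=; apply: eq_bigr => w _; rewrite card_sep_sum.
Qed.

Lemma sum_mem_le_card (P : pred V) S : \sum_(u | P u) (u \in S) <= #|S|.
Proof.
rewrite -sum1_card big_mkcond [X in _ <= X]big_mkcond /=.
by apply: leq_sum => u _; case: (P u); case: (u \in S).
Qed.

Lemma leq_card_bigcup (I : finType) (P : pred I) (F : I -> {set V}) :
  #|\bigcup_(i | P i) F i| <= \sum_(i | P i) #|F i|.
Proof.
apply: (big_ind2 (fun (X : {set V}) n => #|X| <= n)) => // [|X1 n1 X2 n2 h1 h2].
  by rewrite cards0.
exact: leq_trans (leq_card_setU X1 X2) (leq_add h1 h2).
Qed.

Lemma induced_conn_star E A c : symmetric E -> c \in A ->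
  (forall a, a \in A -> a != c -> E c a) -> induced_conn E A.
Proof.
move=> sE cA Ec u v uA vA.
set F := [rel a b | [&& E a b, a \in A & b \in A]].
have Fc a : a \in A -> connect F c a.
  move=> aA; have [->|ac] := eqVneq a c; first exact: connect0.
  by apply: connect1; rewrite /= Ec // cA aA.
have Fsym : connect_sym F.
  apply: sym_connect_sym => a b /=.
  by rewrite sE; case: (a \in A); case: (b \in A); rewrite ?andbF.
by apply: connect_trans (Fc v vA); rewrite Fsym; exact: Fc.
Qed.

Lemma induced_conn_bigcup E E' S (B : V -> {set V}) :
  (forall u, u \in S -> induced_conn E (B u)) ->
  (forall u w, u \in S -> w \in S -> E' u w ->
     exists a b, [/\ a \in B u, b \in B w & E a b]) ->
  induced_conn E' S -> induced_conn E (\bigcup_(u in S) B u).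
Proof.
move=> Bconn BE' connS a b /bigcupP [u uS au] /bigcupP [w wS bw].
set U := \bigcup_(u in S) B u; set F := [rel x y | [&& E x y, x \in U & y \in U]].
have inU z c : z \in S -> c \in B z -> c \in U by move=> zS cz; apply/bigcupP; exists z.
have connB z c c' : z \in S -> c \in B z -> c' \in B z -> connect F c c'.
  move=> zS cz c'z; apply: connect_sub (Bconn z zS c c' cz c'z) => x y /and3P [exy xz yz].
  by apply: connect1; rewrite /= exy (inU z x) ?(inU z y).
pose P z := z \in S -> forall c, c \in B z -> connect F a c.
suff /(_ wS b bw) : P w by [].
apply: connect_invariant (connS u w uS wS) _ => [z z' Pz /and3P [ezz' zS z'S] _ c cz'|].
  have [x [y [xz yz' exy]]] := BE' z z' zS z'S ezz'.
  apply: connect_trans (Pz zS x xz) (connect_trans _ (connB z' y c z'S yz' cz')).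
  by apply: connect1; rewrite /= exy (inU z x) ?(inU z' y).
by move=> _ c cu; exact: connB au cu.
Qed.

Lemma clique_minor0 E R : clique_minor E R 0.
Proof. by exists (fun _ => set0); split => -[]. Qed.

Lemma clique_minorS E R R' m :
  clique_minor E R m -> R \subset R' -> clique_minor E R' m.
Proof.
move=> [phi [ne0 sR cn dj adj]] RR'; exists phi; split => // i.
exact: subset_trans (sR i) RR'.
Qed.

Lemma clique_minor_branch E E' R R' (B : V -> {set V}) m :
  (forall u, u \in R -> u \in B u) ->
  (forall u, u \in R -> B u \subset R') ->
  (forall u, u \in R -> induced_conn E (B u)) ->
  (forall u w, u \in R -> w \in R -> u != w -> [disjoint B u & B w]) ->
  (forall u w, u \in R -> w \in R -> E' u w ->
     exists a b, [/\ a \in B u, b \in B w & E a b]) ->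
  clique_minor E' R m -> clique_minor E R' m.
Proof.
move=> Bin BR Bconn Bdisj BE [phi [ne0 sR cn dj adj]].
have inR i u : u \in phi i -> u \in R by apply: (subsetP (sR i)).
exists (fun i => \bigcup_(u in phi i) B u); split.
- move=> i; have /set0Pn [u ui] := ne0 i.
  by apply/set0Pn; exists u; apply/bigcupP; exists u; rewrite ?Bin ?(inR i).
- by move=> i; apply/bigcupsP => u /(inR i); exact: BR.
- move=> i; apply: induced_conn_bigcup (cn i) => [u /(inR i)|u w /(inR i) + /(inR i)].
    exact: Bconn.
  exact: BE.
- move=> i j ij; rewrite -setI_eq0; apply/eqP/setP => x; rewrite inE in_set0.
  apply/negbTE/andP => -[/bigcupP [u ui xu] /bigcupP [w wj xw]].
  have uw : u != w.
    by apply/eqP => uw; move: (disjointFr (dj i j ij) ui); rewrite uw wj.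
  by move: (disjointFr (Bdisj u w (inR i u ui) (inR j w wj) uw) xu); rewrite xw.
- move=> i j ij; have [u [w [ui wj euw]]] := adj i j ij.
  have [a [b [au bw eab]]] := BE u w (inR i u ui) (inR j w wj) euw.
  by exists a, b; split => //; apply/bigcupP; [exists u | exists w].
Qed.

Lemma clique_minor_apex E R N x m : symmetric E ->
  clique_minor E N m -> x \in R -> x \notin N -> N \subset R ->
  (forall z, z \in N -> E x z) -> clique_minor E R m.+1.
Proof.
move=> sE [phi [ne0 sN cn dj adj]] xR xN NR Ex.
have xphi j : x \notin phi j by apply: contra xN; exact: (subsetP (sN j)).
exists (fun i => if unlift ord_max i is Some j then phi j else [set x]); split.
- move=> i; case: unliftP => [j _|_]; first exact: ne0.
  by apply/set0Pn; exists x; exact: set11.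
- move=> i; case: unliftP => [j _|_]; first exact: subset_trans (sN j) NR.
  by rewrite sub1set.
- move=> i; case: unliftP => [j _|_]; first exact: cn.
  by move=> a b /set1P -> /set1P ->; exact: connect0.
- move=> i k; case: unliftP => [j ->|->]; case: unliftP => [l ->|->].
  + by move=> h; apply: dj; apply: contraNneq h => ->.
  + by rewrite disjoint_sym disjoints1.
  + by rewrite disjoints1.
  + by rewrite eqxx.
- move=> i k; case: unliftP => [j ->|->]; case: unliftP => [l ->|->].
  + by move=> h; apply: adj; apply: contraNneq h => ->.
  + move=> _; have /set0Pn [z zj] := ne0 j.
    by exists z, x; rewrite set11 zj sE Ex // (subsetP (sN j)).
  + move=> _; have /set0Pn [z zl] := ne0 l.
    by exists x, z; rewrite set11 zl Ex // (subsetP (sN l)).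
  + by rewrite eqxx.
Qed.

End CliqueMinors.

Section Mader.
Variable V : finType.
Implicit Types (E : rel V) (R : {set V}).

(* The edge xy is contracted into x; y is then removed from the vertex set (R :\ y). *)
Definition contract E x y : rel V := fun p q =>
  (p != q) && [|| E p q, (p == x) && E y q | (q == x) && E p y].

Lemma contract_sym E x y : symmetric E -> symmetric (contract E x y).
Proof.
move=> sE p q; rewrite /contract eq_sym (sE q p) (sE y p) (sE q y).
by case: (p != q); case: (E p q); case: ((p == x) && E y q); case: ((q == x) && E p y).
Qed.

Lemma contract_irr E x y : irreflexive (contract E x y).
Proof. by move=> p; rewrite /contract eqxx. Qed.

Section Contraction.
Variables (E : rel V) (R : {set V}) (x y : V).
Hypotheses (sE : symmetric E) (iE : irreflexive E).
Hypotheses (xR : x \in R) (yR : y \in R) (exy : E x y).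

Let common := nbhd E R x :&: nbhd E R y.

Lemma deg_contract u : u \in R :\ y -> u != x ->
  deg E R u <= deg (contract E x y) (R :\ y) u + (u \in common).
Proof.
move=> /setD1P [uy uR] ux.
have sub1 : nbhd E R u :\ y \subset nbhd (contract E x y) (R :\ y) u.
  apply/subsetP => w; rewrite !inE => /and3P [wy wR euw].
  have uw : u != w by apply: contraTneq euw => ->; rewrite iE.
  by rewrite wy wR /contract uw euw.
rewrite /deg (cardsD1 y (nbhd E R u)) [y \in _]inE yR /=.
have [Euy|_] /= := boolP (E u y); last by have := subset_leq_card sub1; lia.
have [Eux|nEux] := boolP (E u x).
  have -> : u \in common by rewrite !inE uR sE Eux sE Euy.
  by have := subset_leq_card sub1; lia.
have xin : x \in nbhd (contract E x y) (R :\ y) u.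
  have xy : x != y by apply: contraTneq Euy => <-.
  by rewrite !inE xy xR /contract ux eqxx Euy !orbT.
have sub2 : nbhd E R u :\ y \subset nbhd (contract E x y) (R :\ y) u :\ x.
  apply/subsetP => w wi; rewrite in_setD1 (subsetP sub1 _ wi) andbT.
  by apply: contraTneq wi => ->; rewrite !inE (negbTE nEux) !andbF.
rewrite [X in _ <= X + _](cardsD1 x) xin.
by have := subset_leq_card sub2; lia.
Qed.

Lemma deg_contract_merged :
  deg E R x + deg E R y <= deg (contract E x y) (R :\ y) x + 2 + #|common|.
Proof.
rewrite /deg /common -cardsUI; set A := nbhd E R x :|: nbhd E R y.
have sub : A :\ x :\ y \subset nbhd (contract E x y) (R :\ y) x.
  apply/subsetP => w; rewrite !inE => /and3P [wy wx /orP [] /andP [wR e]];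
    by rewrite wy wR /contract eq_sym wx e ?eqxx ?orbT.
rewrite (cardsD1 x A) (cardsD1 y (A :\ x)).
have := subset_leq_card sub; have := leq_b1 (x \in A); have := leq_b1 (y \in A :\ x).
lia.
Qed.

Lemma degsum_contract :
  degsum E R <= degsum (contract E x y) (R :\ y) + 2 + 2 * #|common|.
Proof.
have xy : x != y by apply: contraTneq exy => ->; rewrite iE.
have xR' : x \in R :\ y by rewrite !inE xy xR.
rewrite /degsum (bigD1 y) //=.
rewrite (eq_bigl (fun u => u \in R :\ y)); last by move=> u; rewrite in_setD1 andbC.
rewrite (bigD1 x) //= [X in _ <= X + _ + _](bigD1 x) //=.
have rest : \sum_(u in R :\ y | u != x) deg E R u <=
   \sum_(u in R :\ y | u != x) deg (contract E x y) (R :\ y) u + #|common|.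
  apply: leq_trans (_ : _ <= \sum_(u in R :\ y | u != x)
                           (deg (contract E x y) (R :\ y) u + (u \in common))) _.
    by apply: leq_sum => u /andP [uR ux]; exact: deg_contract.
  by rewrite big_split leq_add2l sum_mem_le_card.
by have := deg_contract_merged; lia.
Qed.

End Contraction.

Lemma clique_minor_contract E R x y m : symmetric E -> x \in R -> y \in R -> E x y ->
  clique_minor (contract E x y) (R :\ y) m -> clique_minor E R m.
Proof.
move=> sE xR yR exy.
pose B z := if z == x then [set x; y] else [set z].
have Bx : B x = [set x; y] by rewrite /B eqxx.
have Bu u : u != x -> B u = [set u] by move=> ux; rewrite /B (negbTE ux).
have Bin u : u \in B u by rewrite /B; case: ifP => [/eqP ->|_]; rewrite !inE eqxx.
apply: (clique_minor_branch (B := B)) => [u _ //||||].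
- move=> u; rewrite !inE => /andP [_ uR]; have [->|ux] := eqVneq u x.
    by rewrite Bx subUset !sub1set xR yR.
  by rewrite Bu // sub1set.
- move=> u _; have [->|ux] := eqVneq u x.
    rewrite Bx; apply: (induced_conn_star (c := x)) => //; first by rewrite !inE eqxx.
    by move=> a; rewrite !inE => /orP [] /eqP -> //; rewrite eqxx.
  rewrite Bu //; apply: (induced_conn_star (c := u)) => //; first by rewrite !inE.
  by move=> a; rewrite !inE => ->.
- move=> u w; rewrite !inE => /andP [uy _] /andP [wy _] uw.
  have [ux|ux] := eqVneq u x; have [wx|wx] := eqVneq w x.
  + by move: uw; rewrite ux wx eqxx.
  + by rewrite ux Bx Bu // disjoint_sym disjoints1 !inE negb_or wx wy.
  + by rewrite wx Bx Bu // disjoints1 !inE negb_or ux uy.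
  + by rewrite (Bu u) // (Bu w) // disjoints1 !inE.
- move=> u w _ _ /andP [_ /or3P [e|/andP [/eqP -> e]|/andP [/eqP -> e]]].
  + by exists u, w; rewrite !Bin.
  + by exists y, w; rewrite Bx !inE eqxx orbT Bin.
  + by exists u, y; rewrite Bx !inE eqxx orbT Bin.
Qed.

Lemma clique_minor_nbhd E R x m : symmetric E -> irreflexive E -> x \in R ->
  clique_minor E (nbhd E R x) m -> clique_minor E R m.+1.
Proof.
move=> sE iE xR xmin; apply: (clique_minor_apex sE xmin xR).
- by rewrite inE iE andbF.
- by apply/subsetP => z; rewrite inE => /andP [].
- by move=> z; rewrite inE => /andP [].
Qed.

Lemma degsum_nbhd E R x k :
  (forall z, z \in R -> E x z -> k <= #|nbhd E R x :&: nbhd E R z|) ->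
  k * #|nbhd E R x| <= degsum E (nbhd E R x).
Proof.
move=> common_ge; rewrite /degsum mulnC -sum_nat_const; apply: leq_sum => z.
rewrite inE => /andP [zR exz]; apply: leq_trans (common_ge z zR exz) _.
apply/subset_leq_card/subsetP => w.
by rewrite !inE => /andP [/andP [-> ->] /andP [_ ->]].
Qed.

(* degsum E R / #|R| is the average degree.  An edge with fewer than 2^t common
   neighbours is contracted; otherwise we recurse into a neighbourhood. *)
Theorem mader t E R : symmetric E -> irreflexive E -> R != set0 ->
  2 ^ t * #|R| <= degsum E R -> clique_minor E R t.+1.
Proof.
elim: t E R => [|t IHt] E R sE iE R0 hdeg.
  have /set0Pn [x xR] := R0.
  apply: clique_minor_apex sE (clique_minor0 E set0) xR _ _ _ => [||z];
    by rewrite ?inE ?sub0set.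
have [n] := ubnP #|R|; elim: n E R sE iE R0 hdeg => // n IHn E R sE iE R0 hdeg ltRn.
have [/existsP [x /existsP [y /and4P [xR yR exy few]]]|many] := boolP
  [exists x, exists y, [&& x \in R, y \in R, E x y & #|nbhd E R x :&: nbhd E R y| < 2 ^ t]].
  have xy : x != y by apply: contraTneq exy => ->; rewrite iE.
  have cardRy : #|R :\ y|.+1 = #|R| by rewrite (cardsD1 y R) yR.
  apply: (clique_minor_contract sE xR yR exy).
  apply: IHn (contract_sym x y sE) (contract_irr E x y) _ _ _; last by lia.
    by apply/set0Pn; exists x; rewrite !inE xy.
  have := degsum_contract sE iE xR yR exy; move: hdeg; rewrite !expnS; nia.
have [/exists_inP [x xR]|/exists_inPn isolated] := boolP [exists x in R, 0 < deg E R x].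
  rewrite card_gt0 => /set0Pn [y yN].
  apply: (clique_minor_nbhd sE iE xR (IHt _ _ sE iE _ _)); first by apply/set0Pn; exists y.
  apply: degsum_nbhd => z zR exz; rewrite leqNgt.
  by move/existsPn: many => /(_ x) /existsPn /(_ z); rewrite xR zR exz.
have deg0 : degsum E R = 0 by apply: big1 => u /isolated; rewrite lt0n negbK => /eqP.
by move: hdeg; rewrite deg0 leqn0 muln_eq0 expn_eq0 /= cards_eq0 (negbTE R0).
Qed.

End Mader.

Section Degeneracy.
Variable V : finType.
Implicit Types (E o : rel V) (S : {set V}).

Definition degenerate E d := forall S, S != set0 -> exists2 u, u \in S & deg E S u <= d.

Lemma degsum_no_clique_minor t E R : symmetric E -> irreflexive E ->
  ~ clique_minor E R t.+1 -> degsum E R <= 2 ^ t * #|R|.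
Proof.
move=> sE iE noK; have [->|R0] := eqVneq R set0; first by rewrite /degsum big_set0.
by rewrite leqNgt; apply/negP => /ltnW /(mader sE iE R0).
Qed.

Lemma degenerate_degsum E d : (forall S, degsum E S <= d * #|S|) -> degenerate E d.
Proof.
move=> sparse S S0.
have [/exists_inP [u uS du]|/exists_inPn high] := boolP [exists u in S, deg E S u <= d].
  by exists u.
have : \sum_(u in S) d.+1 <= degsum E S by apply: leq_sum => u /high; rewrite -ltnNge.
by rewrite sum_nat_const; have := sparse S; rewrite -card_gt0 in S0; nia.
Qed.

Lemma degenerate_no_clique_minor t E : symmetric E -> irreflexive E ->
  ~ clique_minor E setT t.+1 -> degenerate E (2 ^ t).
Proof.
move=> sE iE noK; apply: degenerate_degsum => S.
by apply: degsum_no_clique_minor sE iE _ => /clique_minorS /(_ (subsetT S)).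
Qed.

Definition orientation_on E S d o :=
  [/\ forall u v, o u v -> [&& E u v, u \in S & v \in S],
      forall u v, u \in S -> v \in S -> E u v -> o u v || o v u,
      forall u v, o u v -> ~~ o v u
    & forall v, #|[set u | o u v]| <= d].

Lemma orientation_on0 E d : orientation_on E set0 d (fun _ _ => false).
Proof.
split=> // [u v|v]; first by rewrite inE.
by rewrite (_ : [set u | false] = set0) ?cards0 //; apply/setP => u; rewrite !inE.
Qed.

Lemma orientation_on_extend E S d o u0 : symmetric E -> irreflexive E ->
  u0 \in S -> deg E S u0 <= d -> orientation_on E (S :\ u0) d o ->
  orientation_on E S d (fun a b => o a b || [&& b == u0, a \in S :\ u0 & E a u0]).
Proof.
move=> sE iE u0S du0 [oE ocov oanti oin].
have oS' a b : o a b -> (a \in S :\ u0) && (b \in S :\ u0).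
  by move/oE => /and3P [_ -> ->].
split.
- move=> u v /orP [/oE /and3P [e /setD1P [_ uS] /setD1P [_ vS]] | /and3P [/eqP -> uS e]].
    by rewrite e uS vS.
  by move: uS => /setD1P [_ ->]; rewrite e u0S.
- move=> u v uS vS e.
  have [eu|nu] := eqVneq u u0; have [ev|nv] := eqVneq v u0.
  + by move: e; rewrite eu ev iE.
  + by rewrite eu ?eqxx !inE nv vS sE -eu e !orbT.
  + by rewrite ev ?eqxx !inE nu uS -ev e !orbT.
  + have uS' : u \in S :\ u0 by rewrite !inE nu uS.
    have vS' : v \in S :\ u0 by rewrite !inE nv vS.
    by have /orP [->|->] := ocov u v uS' vS' e; rewrite ?orbT.
- move=> u v /orP [ouv | /and3P [/eqP ev uS e]].
    rewrite negb_or oanti //=; apply/negP => /and3P [/eqP eu _ _].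
    by move: (oS' _ _ ouv); rewrite eu !inE eqxx.
  rewrite negb_or; apply/andP; split.
    by apply/negP => /oS' /andP [vS _]; move: vS; rewrite ev !inE eqxx.
  by apply/negP => /and3P [/eqP eu]; move: uS; rewrite eu !inE eqxx.
- move=> v; have [->|nv] := eqVneq v u0.
    apply: leq_trans du0; apply: subset_leq_card; apply/subsetP => a.
    rewrite !inE => /orP [/oS' /andP [_]|/and3P [_ aS e]]; first by rewrite !inE eqxx.
    by move: aS => /andP [_ ->]; rewrite sE e.
  apply: leq_trans (oin v); apply: subset_leq_card; apply/subsetP => a.
  by rewrite !inE /= orbF.
Qed.

Lemma degenerate_orientation E d : symmetric E -> irreflexive E -> degenerate E d ->
  exists o, [/\ subrel o E, forall u v, E u v -> o u v || o v u,
                forall u v, o u v -> ~~ o v u & forall v, #|[set u | o u v]| <= d].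
Proof.
move=> sE iE dgn.
suff [o [oE ocov oanti oin]] : exists o, orientation_on E setT d o.
  exists o; split=> // [u v /oE /andP [] //|u v]; exact: ocov.
have [n] := ubnP #|[set: V]|; elim: n setT => // n IHn S ltSn.
have [->|S0] := eqVneq S set0; first by exists (fun _ _ => false); exact: orientation_on0.
have [u0 u0S du0] := dgn S S0.
have [|o oS'] := IHn (S :\ u0); first by rewrite (cardsD1 u0 S) u0S in ltSn.
by eexists; exact: orientation_on_extend oS'.
Qed.

Lemma degenerate_coloring E d : symmetric E -> irreflexive E -> degenerate E d ->
  exists col : V -> 'I_d.+1, forall u v, E u v -> col u != col v.
Proof.
move=> sE iE dgn.
suff [col colP] : exists col : V -> 'I_d.+1,
    forall u v, u \in [set: V] -> v \in [set: V] -> E u v -> col u != col v.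
  by exists col => u v; apply: colP; rewrite inE.
have [n] := ubnP #|[set: V]|; elim: n setT => // n IHn S ltSn.
have [->|S0] := eqVneq S set0; first by exists (fun _ => ord0) => u v; rewrite inE.
have [u0 u0S du0] := dgn S S0.
have [|col colP] := IHn (S :\ u0); first by rewrite (cardsD1 u0 S) u0S in ltSn.
have [c c_free] : exists c, c \notin [set col w | w in nbhd E S u0].
  apply/existsP; rewrite -negb_forall; apply/negP => /forallP used.
  have : #|'I_d.+1| <= #|[set col w | w in nbhd E S u0]|.
    by apply: subset_leq_card; apply/subsetP => c _; exact: used.
  by rewrite card_ord; move/leq_trans/(_ (leq_trans (leq_imset_card _ _) du0)); rewrite ltnn.
have free w : w \in S -> E u0 w -> c != col w.
  by move=> wS ew; apply: contraNneq c_free => ->; apply: imset_f; rewrite inE wS ew.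
exists (fun a => if a == u0 then c else col a) => u v uS vS e.
have [eu|nu] := eqVneq u u0.
  have nv : v != u0 by apply: contraTneq e => ->; rewrite eu iE.
  by rewrite (negbTE nv) free // -eu.
have [ev|nv] := eqVneq v u0; first by rewrite eq_sym free // sE -ev.
by apply: colP => //; rewrite !inE ?nu ?nv.
Qed.

End Degeneracy.

Section Augmentation.
Variables (V : finType) (G o : rel V) (t d : nat).
Hypotheses (sG : symmetric G) (iG : irreflexive G).
Hypothesis noK : ~ clique_minor G setT t.+1.
Hypotheses (oG : subrel o G) (oin : forall v, #|[set u | o u v]| <= d).
Implicit Types (S : {set V}).

Let sparse (E : rel V) S : symmetric E -> irreflexive E ->
  (clique_minor E S t.+1 -> clique_minor G setT t.+1) -> degsum E S <= 2 ^ t * #|S|.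
Proof. by move=> sE iE EG; apply: degsum_no_clique_minor sE iE (fun K => noK (EG K)). Qed.

Definition inn v := [set u | o u v].

Definition augment : rel V := fun u w => (u != w) &&
  [|| G u w, [exists v, o u v && o v w], [exists v, o w v && o v u]
    | [exists v, o u v && o w v]].

Lemma augment_sym : symmetric augment.
Proof.
move=> u w; rewrite /augment eq_sym sG.
have -> : [exists v, o w v && o u v] = [exists v, o u v && o w v].
  by apply/existsP/existsP => -[v h]; exists v; rewrite andbC.
by case: (w != u); case: (G w u); case: [exists v, o u v && o v w];
   case: [exists v, o w v && o v u].
Qed.

Lemma augment_irr : irreflexive augment.
Proof. by move=> u; rewrite /augment eqxx. Qed.

Lemma augment_of_edge u w : G u w -> augment u w.
Proof. by move=> e; rewrite /augment e andbT; apply: contraTneq e => ->; rewrite iG. Qed.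

(* Every vertex outside S is merged into its i-th in-neighbour: the branch sets are
   disjoint stars of G, so branch_graph S i is a minor of G on S. *)
Definition branch S (i : nat) z :=
  z |: [set v | (v \notin S) && o z v && (index z (enum (inn v)) == i)].

Definition branch_graph S i : rel V := fun u w =>
  (u != w) && [exists a in branch S i u, exists b in branch S i w, G a b].

Lemma branch_graph_sym S i : symmetric (branch_graph S i).
Proof.
move=> u w; rewrite /branch_graph eq_sym; congr (_ && _).
by apply/exists_inP/exists_inP => -[a aB /exists_inP [b bB e]]; exists b => //;
  apply/exists_inP; exists a; rewrite // sG.
Qed.

Lemma branch_graph_irr S i : irreflexive (branch_graph S i).
Proof. by move=> u; rewrite /branch_graph eqxx. Qed.

Lemma disjoint_branch S i u w : u \in S -> w \in S -> u != w ->
  [disjoint branch S i u & branch S i w].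
Proof.
move=> uS wS uw; rewrite -setI_eq0; apply/eqP/setP => a; rewrite /branch !inE.
apply/negbTE/negP => /andP [/orP [/eqP au | /andP [/andP [aS oua] iu]]
                            /orP [/eqP aw | /andP [/andP [aS' owa] iw]]].
- by move: uw; rewrite -au -aw eqxx.
- by move: aS'; rewrite au uS.
- by move: aS; rewrite aw wS.
have uin : u \in enum (inn a) by rewrite mem_enum inE.
have win : w \in enum (inn a) by rewrite mem_enum inE.
have := nth_index u uin; rewrite (eqP iu) -(eqP iw) nth_index // => wu.
by move: uw; rewrite wu eqxx.
Qed.

Lemma degsum_branch_graph S i : degsum (branch_graph S i) S <= 2 ^ t * #|S|.
Proof.
apply: sparse (@branch_graph_sym S i) (@branch_graph_irr S i) _.
apply: (clique_minor_branch (B := branch S i)) => //.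
- by move=> u _; rewrite setU11.
- move=> u _; apply: (induced_conn_star (c := u)) => //; first by rewrite setU11.
  move=> a; rewrite !inE => /orP [/eqP -> |/andP [/andP [_ oua] _]]; first by rewrite eqxx.
  by move=> _; exact: oG.
- exact: disjoint_branch.
- by move=> u w _ _ /andP [_ /exists_inP [a aB /exists_inP [b bB e]]]; exists a, b.
Qed.

Definition out2 S u := [set w in S | [exists v, o u v && o v w]].
Definition in2 S w := [set u in S | [exists v, o u v && o v w]].
Definition frat S u := [set w in S | [exists v in S, o u v && o w v]].

Lemma nbhd_augment_sub S u : u \in S ->
  nbhd augment S u \subset nbhd G S u :|: out2 S u :|: in2 S u :|: frat S u
                           :|: \bigcup_(i < d) nbhd (branch_graph S i) S u.
Proof.
move=> uS; apply/subsetP => w; rewrite inE => /andP [wS /andP [uw /or4P [e|e|e|e]]];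
  rewrite !in_setU.
- by rewrite !inE wS e.
- by rewrite !inE wS e !orbT.
- by rewrite [w \in in2 S u]inE wS e !orbT.
move/existsP: e => [v /andP [ouv owv]]; have [vS|vS] := boolP (v \in S).
  suff -> : w \in frat S u by rewrite orbT.
  by rewrite inE wS; apply/exists_inP; exists v; rewrite ?ouv ?owv.
have uin : u \in enum (inn v) by rewrite mem_enum inE.
have lt : index u (enum (inn v)) < d by apply: leq_trans (oin v); rewrite cardE index_mem.
apply/orP; right; apply/bigcupP; exists (Ordinal lt) => //.
rewrite inE wS /branch_graph uw /=; apply/exists_inP; exists v.
  by rewrite /branch !inE (negbTE vS) ouv eqxx orbT.
by apply/exists_inP; exists w; rewrite ?setU11 // sG oG.
Qed.

Lemma card_bigcup_inn (A : {set V}) : #|\bigcup_(v in A) inn v| <= #|A| * d.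
Proof.
apply: leq_trans (leq_card_bigcup _ _) _; rewrite -sum_nat_const.
by apply: leq_sum => v _; exact: oin.
Qed.

Lemma card_in2 S w : #|in2 S w| <= d * d.
Proof.
apply: (@leq_trans #|\bigcup_(v in inn w) inn v|).
  apply/subset_leq_card/subsetP => x; rewrite inE => /andP [_ /existsP [v /andP [oxv ovw]]].
  by apply/bigcupP; exists v; rewrite inE.
exact: leq_trans (card_bigcup_inn _) (leq_mul (oin w) (leqnn d)).
Qed.

Lemma sum_card_in2 S : \sum_(u in S) #|in2 S u| <= d * d * #|S|.
Proof. by rewrite mulnC -sum_nat_const; apply: leq_sum => u _; exact: card_in2. Qed.

Lemma sum_card_out2 S : \sum_(u in S) #|out2 S u| <= d * d * #|S|.
Proof. by rewrite /out2 double_count; exact: sum_card_in2. Qed.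

Lemma sum_card_frat S : \sum_(u in S) #|frat S u| <= d * d * #|S|.
Proof.
apply: (@leq_trans (\sum_(u in S) #|[set v in S | o u v]| * d)).
  apply: leq_sum => u _; apply: leq_trans (card_bigcup_inn _).
  apply/subset_leq_card/subsetP => w; rewrite inE.
  move=> /andP [_ /exists_inP [v vS /andP [ouv owv]]].
  by apply/bigcupP; exists v; rewrite !inE ?vS ?ouv ?owv.
have in_le : \sum_(v in S) #|[set u in S | o u v]| <= #|S| * d.
  rewrite -sum_nat_const; apply: leq_sum => v _; apply: leq_trans (oin v).
  by apply/subset_leq_card/subsetP => x; rewrite !inE => /andP [].
by rewrite -big_distrl /= double_count; nia.
Qed.

Lemma sum_deg_branch_graph S :
  \sum_(u in S) \sum_(i < d) deg (branch_graph S i) S u <= d * 2 ^ t * #|S|.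
Proof.
rewrite exchange_big /= -mulnA -[d in d * _]card_ord -sum_nat_const.
by apply: leq_sum => i _; exact: degsum_branch_graph.
Qed.

Definition aug_degeneracy := 2 ^ t + 3 * (d * d) + d * 2 ^ t.

Lemma degsum_augment S : degsum augment S <= aug_degeneracy * #|S|.
Proof.
have deg_le u : u \in S -> deg augment S u <=
    deg G S u + #|out2 S u| + #|in2 S u| + #|frat S u|
    + \sum_(i < d) deg (branch_graph S i) S u.
  move=> uS; apply: leq_trans (subset_leq_card (nbhd_augment_sub uS)) _.
  apply: leq_trans (leq_card_setU _ _) (leq_add _ (leq_card_bigcup _ _)).
  do 2!apply: leq_trans (leq_card_setU _ _) (leq_add _ (leqnn _)).
  exact: leq_card_setU.
rewrite /degsum; apply: leq_trans (leq_sum _ deg_le) _; rewrite !big_split /=.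
have hG := sparse sG iG (fun K => clique_minorS K (subsetT S)).
apply: leq_trans (leq_add (leq_add (leq_add (leq_add hG (sum_card_out2 S))
  (sum_card_in2 S)) (sum_card_frat S)) (sum_deg_branch_graph S)) _.
by rewrite /aug_degeneracy; nia.
Qed.

Lemma augment_coloring :
  exists col : V -> 'I_aug_degeneracy.+1, forall u v, augment u v -> col u != col v.
Proof.
apply: degenerate_coloring augment_sym augment_irr _.
exact: degenerate_degsum degsum_augment.
Qed.

End Augmentation.

Section StarIntervals.
Variables (V : finType) (G o : rel V) (K : nat) (col : V -> 'I_K) (p q : nat).
Hypotheses (sG : symmetric G) (iG : irreflexive G) (oG : subrel o G).
Hypothesis ocov : forall u v, G u v -> o u v || o v u.
Hypothesis oanti : forall u v, o u v -> ~~ o v u.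
Hypothesis colP : forall u v, augment G o u v -> col u != col v.

Definition in_pair v := (col v == p :> nat) || (col v == q :> nat).
Definition leaf v := [exists b, in_pair b && o b v].
Definition parent v := odflt v [pick b | in_pair b && o b v].

Local Notation N := #|V|.
Definition idx (v : V) : nat := enum_rank v.

(* The colour classes p and q induce in G a disjoint union of stars oriented away
   from their centres. *)
Definition lo v :=
  if in_pair v then (if leaf v then 2 * N * idx (parent v) + idx v else 2 * N * idx v)
  else 0.
Definition hi v :=
  if in_pair v then (if leaf v then 2 * N * idx (parent v) + idx v else 2 * N * idx v + N)
  else 2 * N * N.

Lemma idx_lt v : idx v < N. Proof. exact: ltn_ord. Qed.

Lemma idx_inj : injective idx.
Proof. by move=> u v /val_inj; exact: enum_rank_inj. Qed.

Lemma parentP v : leaf v -> in_pair (parent v) && o (parent v) v.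
Proof.
rewrite /leaf /parent; case: pickP => [b ->|none] //=.
by move/existsP => [b]; rewrite none.
Qed.

(* b -> a and a - c would make b and c adjacent in the augmentation, yet all three
   colours lie in {p, q}. *)
Lemma in_edge_excludes a b c : in_pair a -> in_pair b -> in_pair c ->
  o b a -> G a c -> c != b -> False.
Proof.
move=> pa pb pc oba gac cb.
have ab := colP (augment_of_edge o iG (oG oba)).
have ac := colP (augment_of_edge o iG gac).
have bc : augment G o b c.
  rewrite /augment eq_sym cb /=; case/orP: (ocov gac) => h.
    by apply/or4P; apply: Or42; apply/existsP; exists a; rewrite oba h.
  by apply/or4P; apply: Or44; apply/existsP; exists a; rewrite oba h.
move: ab ac (colP bc) pa pb pc; rewrite /in_pair -!val_eqE /=.
by move=> e1 e2 e3 /orP [] /eqP ha /orP [] /eqP hb /orP [] /eqP hc; lia.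
Qed.

Lemma leaf_adj_parent v c : leaf v -> in_pair v -> in_pair c -> G v c -> c = parent v.
Proof.
move=> lv pv pc gvc; case/andP: (parentP lv) => pp op.
have [//|cb] := eqVneq c (parent v).
by case: (in_edge_excludes pv pp pc op gvc cb).
Qed.

Lemma parent_not_leaf v : leaf v -> in_pair v -> ~~ leaf (parent v).
Proof.
move=> lv pv; case/andP: (parentP lv) => pp op; apply/negP => lp.
case/andP: (parentP lp) => ppp opp.
apply: (in_edge_excludes pp ppp pv opp (oG op)).
by apply/eqP => e; move: (oanti op); rewrite -e in opp; rewrite opp.
Qed.

Lemma lo_le_hi v : lo v <= hi v.
Proof. by rewrite /lo /hi; case: (in_pair v); case: (leaf v) => //; rewrite leq_addr. Qed.

Lemma lo_le_hi_of_arc u v : in_pair u -> in_pair v -> o u v ->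
  (lo u <= hi v) && (lo v <= hi u).
Proof.
move=> pu pv ouv.
have lv : leaf v by apply/existsP; exists u; rewrite pu ouv.
have puv : parent v = u by symmetry; apply: leaf_adj_parent; rewrite // sG oG.
have nlu : ~~ leaf u by rewrite -puv; exact: parent_not_leaf.
rewrite /lo /hi pu pv lv (negbTE nlu) puv leq_addr /= leq_add2l.
exact: ltnW (idx_lt v).
Qed.

Lemma intervals_meet_of_edge u v : G u v -> (lo u <= hi v) && (lo v <= hi u).
Proof.
have lo_top w : lo w <= 2 * N * N.
  rewrite /lo; case: (in_pair w) => //; case: (leaf w).
    by have := idx_lt (parent w); have := idx_lt w; nia.
  by have := idx_lt w; nia.
move=> e; have [pu|pu] := boolP (in_pair u); have [pv|pv] := boolP (in_pair v).
- have /orP [ouv|ovu] := ocov e; first exact: lo_le_hi_of_arc.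
  by rewrite andbC; exact: lo_le_hi_of_arc.
all: by rewrite /lo /hi ?(negbTE pu) ?(negbTE pv) ?lo_top -?/(lo _) ?lo_top.
Qed.

Lemma block_le a b x y : x < 2 * N -> y < 2 * N -> 2 * N * a + x <= 2 * N * b + y -> a <= b.
Proof. nia. Qed.

Lemma edge_of_intervals_meet u v : u != v -> in_pair u -> in_pair v ->
  (lo u <= hi v) && (lo v <= hi u) -> G u v.
Proof.
move=> uv pu pv; rewrite /lo /hi pu pv.
have hu := idx_lt u; have hv := idx_lt v.
have [lu|lu] := boolP (leaf u); have [lv|lv] := boolP (leaf v); move=> /andP [h1 h2].
- exfalso; have hpu := idx_lt (parent u); have hpv := idx_lt (parent v).
  have e1 : idx (parent u) <= idx (parent v).
    by apply: (block_le (x := idx u) (y := idx v)); nia.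
  have e2 : idx (parent v) <= idx (parent u).
    by apply: (block_le (x := idx v) (y := idx u)); nia.
  have ep : idx (parent u) = idx (parent v) by lia.
  rewrite ep in h1; have e : idx u = idx v by lia.
  by move: uv; rewrite (idx_inj e) eqxx.
- have e1 : idx (parent u) <= idx v by apply: (block_le (x := idx u) (y := N)); nia.
  have e2 : idx v <= idx (parent u) by apply: (block_le (x := 0) (y := idx u)); nia.
  have puv : parent u = v by apply: idx_inj; lia.
  by have /andP [_ /oG] := parentP lu; rewrite puv sG.
- have e1 : idx u <= idx (parent v) by apply: (block_le (x := 0) (y := idx v)); nia.
  have e2 : idx (parent v) <= idx u by apply: (block_le (x := idx v) (y := N)); nia.
  have pvu : parent v = u by apply: idx_inj; lia.
  by have /andP [_ /oG] := parentP lv; rewrite pvu.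
- exfalso.
  have e1 : idx u <= idx v by apply: (block_le (x := 0) (y := N)); nia.
  have e2 : idx v <= idx u by apply: (block_le (x := 0) (y := N)); nia.
  have e : idx u = idx v by lia.
  by move: uv; rewrite (idx_inj e) eqxx.
Qed.

End StarIntervals.

Section BoxRepresentation.
Local Open Scope ring_scope.

Lemma box_rep_of_nat_intervals (V : finType) (E : rel V) (b : nat)
    (lo hi : V -> 'I_b -> nat) :
  (forall v i, (lo v i <= hi v i)%N) ->
  (forall u v, u != v ->
     (E u v <-> forall i, (lo u i <= hi v i)%N && (lo v i <= hi u i)%N)) ->
  box_rep E b.
Proof.
move=> lo_hi meetE.
exists (fun v i => (lo v i)%:R), (fun v i => (hi v i)%:R); split.
  by move=> v i; rewrite ler_nat.
move=> u v uv; rewrite meetE //; split.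
- move=> meet; exists (fun i => (maxn (lo u i) (lo v i))%:R) => i.
  have /andP [h1 h2] := meet i.
  by rewrite !ler_nat !leq_max !geq_max !leqnn !lo_hi h1 h2 /= ?orbT.
- move=> [x hx] i; have [/andP [a1 a2] /andP [b1 b2]] := hx i.
  by apply/andP; split; rewrite -(ler_nat RR); [exact: le_trans a1 b2 | exact: le_trans b1 a2].
Qed.

End BoxRepresentation.

(* One dimension for each ordered pair of colours: the pair (col u, col v) separates
   any two non-adjacent vertices u and v. *)
Lemma box_rep_augment_coloring (V : finType) (G o : rel V) (K : nat) (col : V -> 'I_K) :
  symmetric G -> irreflexive G -> subrel o G ->
  (forall u v, G u v -> o u v || o v u) -> (forall u v, o u v -> ~~ o v u) ->
  (forall u v, augment G o u v -> col u != col v) -> box_rep G (K * K).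
Proof.
move=> sG iG oG ocov oanti colP.
apply: (box_rep_of_nat_intervals (lo := fun v i => lo o col (i %/ K) (i %% K) v)
                                 (hi := fun v i => hi o col (i %/ K) (i %% K) v)).
  by move=> v i; exact: lo_le_hi.
move=> u v uv; split=> [e i|meet]; first exact: intervals_meet_of_edge.
have K_gt0 : 0 < K by apply: leq_ltn_trans (ltn_ord (col u)).
have lt : col u * K + col v < K * K.
  by have := ltn_ord (col u); have := ltn_ord (col v); nia.
have := meet (Ordinal lt); rewrite /= divnMDl // divn_small ?ltn_ord // addn0.
rewrite modnMDl modn_small ?ltn_ord //.
by apply: (edge_of_intervals_meet sG oG uv); rewrite /in_pair eqxx ?orbT.
Qed.

Lemma minor_of_clique_minor (VH VG : finType) (EH : rel VH) (EG : rel VG) :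
  irreflexive EH -> clique_minor EG setT #|VH|.+1 -> is_minor EH EG.
Proof.
move=> iH [phi [ne0 _ conn disj adj]].
pose f (x : VH) : 'I_#|VH|.+1 := widen_ord (leqnSn _) (enum_rank x).
have f_inj x y : x != y -> f x != f y.
  move=> xy; apply: contra_neq xy => e; apply: enum_rank_inj.
  by apply: val_inj; exact: (congr1 val e).
exists (fun x => phi (f x)); split=> [x|x|x y xy|x y e]; first exact: ne0.
- exact: conn.
- exact/disj/f_inj.
- by apply/adj/f_inj; apply: contraTneq e => ->; rewrite iH.
Qed.

Theorem theorem11 :
  forall (VH : finType) (EH : rel VH),
    simple_graph EH -> planar EH ->
    exists c : nat,
      forall (VG : finType) (EG : rel VG),
        simple_graph EG -> boxicity_ge EG c -> is_minor EH EG.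
Proof.
move=> VH EH [_ iH] _.
pose t := #|VH|; pose K := (aug_degeneracy t (2 ^ t)).+1.
exists (K * K).+1 => VG EG [sG iG] box_ge.
have [Kt|noK] := classic (clique_minor EG setT t.+1); first exact: minor_of_clique_minor.
have dgn := degenerate_no_clique_minor sG iG noK.
have [o [oG ocov oanti oin]] := degenerate_orientation sG iG dgn.
have [col colP] := augment_coloring sG iG noK oG oin.
by have := box_ge _ (box_rep_augment_coloring sG iG oG ocov oanti colP); rewrite ltnn.
Qed.
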